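(* For all $m\geq 1$ and $n\in\mathbb N$, \[ s_{n,m}(122,132)=\frac{1}{mn+1}\binom{(m+1)n}{n}. \]
   Context: $[n]_m=\{1^m,\ldots,n^m\}$; a permutation of $[n]_m$ is a sequence of length $nm$ in which each element of $[n]$ appears exactly $m$ times. A sequence avoids a pattern $\pi$ if it has no subsequence order-isomorphic to $\pi$ (same relative order and same equalities among entries). $s_{n,m}(\Pi)$ is the number of permutations of $[n]_m$ avoiding all patterns in $\Pi$. *)

From mathcomp Require Import all_boot all_order all_algebra.
Set Implicit Arguments. Unset Strict Implicit. Unset Printing Implicit Defensive.

(* s and p are order-isomorphic: same length, and for all positions i, j,
   s_i < s_j iff p_i < p_j (on a total order this also fixes equalities). *)
Definition order_iso (s p : seq nat) : bool :=
  (size s == size p) &&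
  [forall i : 'I_(size p), forall j : 'I_(size p),
     (nth 0 s i < nth 0 s j) == (nth 0 p i < nth 0 p j)].

Definition contains (s p : seq nat) : bool :=
  [exists b : (size s).-tuple bool, order_iso (mask b s) p].

Definition avoids (s p : seq nat) : bool := ~~ contains s p.

Definition multiset_nm (n m : nat) : seq nat :=
  flatten [seq nseq m i | i <- iota 1 n].

Definition is_perm_nm (n m : nat) (s : seq nat) : bool :=
  perm_eq s (multiset_nm n m).

Definition snm (n m : nat) (Pi : seq (seq nat)) : nat :=
  #|[set t : (n * m).-tuple 'I_n |
      let s := [seq (val i).+1 | i <- t] in
      is_perm_nm n m s && all (avoids s) Pi]|.

From mathcomp Require Import all_boot all_order all_algebra zify.
Set Implicit Arguments. Unset Strict Implicit. Unset Printing Implicit Defensive.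
Import GRing.Theory Num.Theory.

(* 1. A sequence avoids 122 and 132 iff it has no entries x..y..z with
      x < z <= y, i.e. iff after each entry a the entries larger than a
      increase strictly (the boolean recursion [avoider]).
   2. Let v be the maximal value of an avoider s, occurring m times, and w
      the subsequence of smaller entries. Then s is obtained from w by putting
      m - 1 copies of v in front and the last copy at a cut of w: a position
      c such that everything after c is at most everything before c.
      Conversely every such insertion is an avoider, and different cuts give
      different sequences.
   3. The insertion at the cut c has m + #{cuts of w at or after c} cuts, so
      the number of avoiders built from a word with k cuts by inserting t more
      values satisfies the recursion [tree_count], which is solved in closed
      form by binomial identities.
   4. Starting from the empty word (one cut) and encoding permutations of
      [n]_m as tuples over 'I_n gives the theorem. *)

Lemma containsP (s p : seq nat) :
  reflect (exists2 u, subseq u s & order_iso u p) (contains s p).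
Proof.
apply: (iffP existsP) => [[b Hb]|[u /subseqP[b Hs ->] Hu]].
  by exists (mask b s) => //; apply: mask_subseq.
have Hb : size b == size s by apply/eqP.
by exists (Tuple Hb).
Qed.

Lemma order_iso3 (x y z a b c : nat) :
  order_iso [:: x; y; z] [:: a; b; c] =
  [&& (x < y) == (a < b), (x < z) == (a < c), (y < z) == (b < c),
      (y < x) == (b < a), (z < x) == (c < a) & (z < y) == (c < b)].
Proof.
rewrite /order_iso /=; apply/idP/idP.
  move=> /forallP H.
  have E i j (Hi : i < 3) (Hj : j < 3) :=
    eqP (forallP (H (Ordinal Hi)) (Ordinal Hj)).
  by rewrite (E 0 1) // (E 0 2) // (E 1 2) // (E 1 0) // (E 2 0) // (E 2 1) //
    !eqxx.
move=> /and5P[/eqP h1 /eqP h2 /eqP h3 /eqP h4 /andP[/eqP h5 /eqP h6]].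
apply/forallP => -[[|[|[|i]]] Hi] //; apply/forallP => -[[|[|[|j]]] Hj] //=;
  by rewrite ?ltnn ?h1 ?h2 ?h3 ?h4 ?h5 ?h6.
Qed.

(* The two patterns 122 and 132 together are the triples x..y..z with
   x < z <= y. *)
Definition bad_triple (s : seq nat) : Prop :=
  exists x y z, subseq [:: x; y; z] s /\ x < z <= y.

Lemma contains_122_132 (s : seq nat) :
  (contains s [:: 1; 2; 2] || contains s [:: 1; 3; 2]) <-> bad_triple s.
Proof.
split.
  have triple u p : order_iso u p -> size p = 3 -> exists x y z, u = [:: x; y; z].
    move=> /andP[/eqP Hs _] Hp; rewrite Hp in Hs.
    by case: u Hs => [|x [|y [|z [|]]]] // _; exists x, y, z.
  case/orP => /containsP[u Hsub Hu];
  have [x [y [z Eu]]] := triple _ _ Hu erefl; subst u; move: Hu; rewrite order_iso3 /=;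
  move=> /and5P[/eqP h1 /eqP h2 /eqP h3 /eqP h4 /andP[/eqP h5 /eqP h6]];
  by exists x, y, z; split=> //; rewrite h2 /= leqNgt h3.
move=> [x [y [z [Hs /andP[Hxz Hzy]]]]].
have Hxy : x < y by apply: leq_trans Hzy.
apply/orP; case: (ltngtP z y) Hzy => // [Hzy' _|Ezy _].
  right; apply/containsP; exists [:: x; y; z] => //.
  by rewrite order_iso3 /= Hxy Hxz Hzy' (ltnNge y z) (ltnW Hzy') (ltnNge y x)
    (ltnW Hxy) (ltnNge z x) (ltnW Hxz).
left; apply/containsP; exists [:: x; y; z] => //.
by subst z; rewrite order_iso3 /= Hxy ltnn (ltnNge y x) (ltnW Hxy).
Qed.

Fixpoint avoider (s : seq nat) : bool :=
  if s is a :: s' then pairwise ltn [seq x <- s' | a < x] && avoider s' else true.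

Lemma larger_not_increasing a s : ~~ pairwise ltn [seq x <- s | a < x] <->
  exists y z, subseq [:: y; z] s /\ a < z <= y.
Proof.
elim: s => [|b s IH] /=; first by split=> // -[y [z []]].
have sub2 y z : subseq [:: y; z] s -> subseq [:: y; z] (b :: s).
  by move=> H; apply: subseq_trans H (subseq_cons s b).
case: ifP => Hab.
  rewrite pairwise_cons negb_and; split.
    case/orP.
      case/allPn => z; rewrite mem_filter => /andP[Haz Hz] Hbz.
      exists b, z; split; first by rewrite /= eqxx sub1seq.
      by rewrite Haz leqNgt.
    by move/IH => [y [z [H1 H2]]]; exists y, z; split=> //; apply: sub2.
  move=> [y [z [/= H1 H2]]]; move: H1; case: eqP => [Eyb|Hyb] H1.
    subst y; apply/orP; left; apply/allPn; exists z.
      by rewrite mem_filter -sub1seq H1; case/andP: H2 => ->.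
    by rewrite -leqNgt; case/andP: H2.
  by apply/orP; right; apply/IH; exists y, z.
split; first by move/IH => [y [z [H1 H2]]]; exists y, z; split=> //; apply: sub2.
move=> [y [z [/= H1 H2]]]; move: H1; case: eqP => [Eyb|Hyb] H1.
  by subst y; case/andP: H2 => H2 H3; rewrite (leq_trans H2 H3) in Hab.
by apply/IH; exists y, z.
Qed.

Lemma avoiderN s : ~~ avoider s <-> bad_triple s.
Proof.
elim: s => [|a s IH] /=; first by split=> // -[x [y [z []]]].
rewrite negb_and; split.
  case/orP.
    move/larger_not_increasing => [y [z [H1 H2]]]; exists a, y, z; split=> //.
    by rewrite /= eqxx.
  move/IH => [x [y [z [H1 H2]]]]; exists x, y, z; split=> //.
  by apply: subseq_trans H1 (subseq_cons s a).
move=> [x [y [z [/= H1 H2]]]]; move: H1; case: eqP => [Exa|Hxa] H1.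
  by subst x; apply/orP; left; apply/larger_not_increasing; exists y, z.
by apply/orP; right; apply/IH; exists x, y, z.
Qed.

Lemma avoids_122_132 s :
  all (avoids s) [:: [:: 1; 2; 2]; [:: 1; 3; 2]] = avoider s.
Proof.
rewrite /= /avoids andbT -negb_or; apply/idP/idP.
  by move=> H; apply/negPn/negP => /avoiderN /contains_122_132; rewrite (negbTE H).
by move=> H; apply/negP => /contains_122_132 /avoiderN; rewrite H.
Qed.

Lemma avoider_subseq s1 s2 : subseq s1 s2 -> avoider s2 -> avoider s1.
Proof.
move=> Hs H2; apply/negP => /negP /avoiderN [x [y [z [H1 H3]]]].
have : ~~ avoider s2.
  by apply/avoiderN; exists x, y, z; split=> //; apply: subseq_trans H1 Hs.
by rewrite H2.
Qed.

Definition cut_ok (w : seq nat) (c : nat) : bool :=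
  allrel (fun y x => y <= x) (drop c w) (take c w).

Definition cuts (w : seq nat) : seq nat :=
  [seq c <- iota 0 (size w).+1 | cut_ok w c].

Lemma mem_cuts w c : (c \in cuts w) = cut_ok w c && (c <= size w).
Proof. by rewrite mem_filter mem_iota add0n ltnS. Qed.

Lemma cuts_sorted w : sorted ltn (cuts w).
Proof. exact/sorted_filter/iota_ltn_sorted/ltn_trans. Qed.

Definition insert_top (m v : nat) (w : seq nat) (c : nat) : seq nat :=
  nseq m.-1 v ++ take c w ++ v :: drop c w.

Local Notation below v s := (all (fun a => a < v) s).
Local Notation atmost v s := (all (fun a => a <= v) s).

Lemma filter_gt_nil v r : atmost v r -> [seq x <- r | v < x] = [::].
Proof. by elim: r => //= a r IH /andP[H1 H2]; rewrite ltnNge H1 /= IH. Qed.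

Lemma filter_lt_nseq k v : [seq x <- nseq k v | x < v] = [::].
Proof. by elim: k => //= k ->; rewrite ltnn. Qed.

Lemma mem_take_drop (w : seq nat) c z :
  (z \in take c w) || (z \in drop c w) = (z \in w).
Proof. by rewrite -mem_cat cat_take_drop. Qed.

Lemma avoider_suffix p q : avoider (p ++ q) -> avoider q.
Proof. exact/avoider_subseq/suffix_subseq. Qed.

Lemma avoider_top_prefix k v t :
  atmost v t -> avoider t -> avoider (nseq k v ++ t).
Proof.
move=> Ht Hv; elim: k => //= k IH; rewrite IH andbT filter_gt_nil //.
by rewrite all_cat Ht andbT; apply/allP => x /nseqP[->].
Qed.

Lemma avoider_insert_cut v x y : avoider (x ++ y) -> below v (x ++ y) ->
  allrel (fun b a => b <= a) y x -> avoider (x ++ v :: y).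
Proof.
elim: x => [|a x IH] /=.
  move=> Hy Hlt _; rewrite Hy andbT filter_gt_nil //.
  by apply/allP => z /(allP Hlt) /ltnW.
move=> /andP[Hp Hv] /andP[Hav Hlt].
rewrite allrel_consr => /andP[Hya Hyx].
rewrite IH // andbT filter_cat /= Hav (filter_gt_nil Hya).
move: Hp; rewrite filter_cat (filter_gt_nil Hya) cats0 => Hp.
rewrite pairwise_cat Hp /= andbT allrel1r.
by apply/allP => z; rewrite mem_filter => /andP[_ Hz]; apply: (allP Hlt);
  rewrite mem_cat Hz.
Qed.

Lemma cut_of_avoider v x y : avoider (x ++ v :: y) ->
  atmost v (x ++ y) -> v \notin x -> allrel (fun b a => b <= a) y x.
Proof.
elim: x => [|a x IH] /=; first by rewrite allrel0r.
move=> /andP[Hp Hv] /andP[Hav Hle]; rewrite inE negb_or => /andP[Hva Hvx].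
rewrite allrel_consr IH // andbT.
have Hav' : a < v by rewrite ltn_neqAle eq_sym Hva.
move: Hp; rewrite filter_cat /= Hav' pairwise_cat /= => /and3P[_ _ /andP[Hall _]].
apply/allP => b Hb; rewrite leqNgt; apply/negP => Hab.
have := allP Hall b; rewrite mem_filter Hab Hb => /(_ erefl).
have : b <= v by apply: (allP Hle); rewrite mem_cat Hb orbT.
by move=> H1 /=; rewrite ltnNge H1.
Qed.

Lemma avoider_insert_top m v w c : avoider w -> below v w -> cut_ok w c ->
  avoider (insert_top m v w c).
Proof.
move=> Hv Hlt Hc; apply: avoider_top_prefix.
  rewrite all_cat /= leqnn /=; apply/andP; split; apply/allP => z Hz;
  by apply/ltnW/(allP Hlt); rewrite -(mem_take_drop w c) Hz ?orbT.
by apply: avoider_insert_cut; rewrite ?cat_take_drop.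
Qed.

Lemma insert_top_below m v w c : below v w -> below v.+1 (insert_top m v w c).
Proof.
move=> H; rewrite /insert_top all_cat all_cat /= ltnSn /=; apply/and3P; split.
- by apply/allP => z /nseqP[->].
- by apply/allP => z Hz; rewrite ltnS ltnW //; apply: (allP H);
    rewrite -(mem_take_drop w c) Hz.
- by apply/allP => z Hz; rewrite ltnS ltnW //; apply: (allP H);
    rewrite -(mem_take_drop w c) Hz orbT.
Qed.

Lemma insert_top_filter m v w c : below v w ->
  [seq x <- insert_top m v w c | x < v] = w.
Proof.
move=> Hlt; rewrite /insert_top !filter_cat /= ltnn filter_lt_nseq.
by rewrite -filter_cat cat_take_drop; apply/all_filterP.
Qed.

Lemma insert_top_count m v w c : 0 < m -> below v w ->
  count_mem v (insert_top m v w c) = m.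
Proof.
move=> Hm Hlt; rewrite /insert_top !count_cat /= count_nseq /= eqxx mul1n.
have no_v u : {subset u <= w} -> count_mem v u = 0.
  by move=> Hs; apply/count_memPn/negP => /Hs /(allP Hlt); rewrite ltnn.
rewrite !no_v /= => [|z Hz|z Hz]; first lia;
  by rewrite -(mem_take_drop w c) Hz ?orbT.
Qed.

Lemma insert_top_inj m v w c c' : below v w -> c <= size w -> c' <= size w ->
  insert_top m v w c = insert_top m v w c' -> c = c'.
Proof.
move=> Hlt Hc Hc' E.
have E2 : take c w ++ v :: drop c w = take c' w ++ v :: drop c' w.
  by move: (congr1 (drop (size (nseq m.-1 v))) E); rewrite /insert_top !drop_size_cat.
have Hn d : v \notin take d w by apply/negP => /mem_take /(allP Hlt); rewrite ltnn.
move: (congr1 (index v) E2); rewrite !index_pivot ?Hn // !size_take_min.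
by move/minn_idPl: Hc => ->; move/minn_idPl: Hc' => ->.
Qed.

Lemma top_decomposition m v s : 0 < m -> avoider s -> atmost v s ->
  count_mem v s = m ->
  exists x y, s = nseq m.-1 v ++ x ++ v :: y /\ v \notin x ++ y.
Proof.
elim: s m => [|a s IH] m Hm //=; first by move=> _ _ E; rewrite -E in Hm.
move=> /andP[Hinc Hav] /andP[Hle Hs].
have [->|Hav'] := eqVneq a v; rewrite ?eqxx => Ecount.
  case: (posnP (count_mem v s)) => Hs0.
    exists [::], s; split; last by rewrite -has_pred1 has_count Hs0.
    by rewrite -Ecount Hs0.
  have [x [y [-> Hxy]]] := IH _ Hs0 Hav Hs erefl.
  by exists x, y; rewrite -Ecount /= -[in RHS](prednK Hs0).
have lt_av : a < v by rewrite ltn_neqAle Hav' Hle.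
have Hm1 : m = 1.
  have {}Ecount : count_mem v s = m by rewrite -Ecount.
  have Hu := pairwise_uniq ltnn Hinc.
  have E : count_mem v [seq x <- s | a < x] = m.
    rewrite count_filter -Ecount; apply: eq_count => z /=.
    by case: eqP => [->|]; rewrite ?lt_av.
  by apply/eqP; rewrite eqn_leq Hm andbT -E (count_uniq_mem v Hu) leq_b1.
have Hc : count_mem v s = 1 by rewrite -Hm1 -Ecount.
have Hin : v \in s by rewrite -has_pred1 has_count Hc.
case/splitPr: Hin Hc => x y Hc; exists (a :: x), y; rewrite Hm1; split=> //.
rewrite cat_cons inE negb_or eq_sym Hav' /=; apply/count_memPn.
by move: Hc; rewrite !count_cat /= eqxx; lia.
Qed.

Lemma insert_top_surj m v s : 0 < m -> avoider s -> atmost v s ->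
  count_mem v s = m ->
  let w := [seq x <- s | x < v] in
  exists2 c, c \in cuts w & s = insert_top m v w c.
Proof.
move=> Hm Hs Hle Hcount w.
have [x [y [Es Hvxy]]] := top_decomposition Hm Hs Hle Hcount.
have Hxy : atmost v (x ++ y).
  apply/allP => z; rewrite mem_cat => Hz; apply: (allP Hle).
  by rewrite Es !mem_cat inE; case/orP: Hz => ->; rewrite !orbT.
have Ew : w = x ++ y.
  rewrite /w Es !filter_cat /= ltnn filter_lt_nseq -filter_cat. apply/all_filterP/allP => z Hz.
  by rewrite ltn_neqAle (allP Hxy z Hz) andbT; apply: contraNneq Hvxy => <-.
exists (size x); rewrite Ew.
  rewrite mem_cuts /cut_ok take_size_cat // drop_size_cat // size_cat leq_addr andbT.
  apply: (@cut_of_avoider v) => //.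
    by apply: (@avoider_suffix (nseq m.-1 v)); rewrite -Es.
  by apply: contra Hvxy; rewrite mem_cat => ->.
by rewrite Es /insert_top take_size_cat // drop_size_cat.
Qed.

Lemma cut_ok_cat p q k : cut_ok (p ++ q) (size p + k) =
  allrel (fun b a => b <= a) (drop k q) p && cut_ok q k.
Proof.
rewrite /cut_ok.
have -> : drop (size p + k) (p ++ q) = drop k q.
  by rewrite addnC -drop_drop drop_size_cat.
have -> : take (size p + k) (p ++ q) = p ++ take k q.
  by rewrite takeD take_size_cat // drop_size_cat.
by rewrite allrel_catr.
Qed.

Lemma cut_ok_top_prefix m v x y i : i < m -> atmost v (x ++ y) ->
  cut_ok (nseq m.-1 v ++ x ++ v :: y) i.
Proof.
move=> Hi Hxy; apply/allrelP => b a Hb.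
have Hi' : i <= size (nseq m.-1 v) by rewrite size_nseq -ltnS (ltn_predK Hi).
rewrite takel_cat // => /mem_take /nseqP[-> _].
move/mem_drop: Hb; rewrite !mem_cat inE => /or3P[/nseqP[-> _]|Hb|/orP[/eqP->|Hb]] //;
  by apply: (allP Hxy); rewrite mem_cat Hb ?orbT.
Qed.

Lemma cut_ok_top_middle m v x y t : 0 < m -> t < size x -> below v x ->
  ~~ cut_ok (nseq m.-1 v ++ x ++ v :: y) (m + t).
Proof.
move=> Hm Ht Hx.
have -> : m + t = size (nseq m.-1 v) + t.+1 by rewrite size_nseq addnS -addSn prednK.
rewrite cut_ok_cat.
apply/nandP; right; case: x Ht Hx => // a x Ht /andP[Hav _].
apply/negP => /allrelP /(_ v a) H.
suff : v <= a by rewrite leqNgt Hav.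
apply: H; last by rewrite /= inE eqxx.
rewrite /= drop_cat; case: ifP => _; first by rewrite mem_cat inE eqxx orbT.
by move: Ht; rewrite ltnS -subn_eq0 => /eqP ->; rewrite inE eqxx.
Qed.

Lemma cut_ok_top_suffix m v x y t : 0 < m -> atmost v y ->
  cut_ok (nseq m.-1 v ++ x ++ v :: y) (m + size x + t) =
  cut_ok (x ++ y) (size x + t).
Proof.
move=> Hm Hy.
have -> : nseq m.-1 v ++ x ++ v :: y = (nseq m.-1 v ++ x ++ [:: v]) ++ y.
  by rewrite -!catA.
have -> : m + size x + t = size (nseq m.-1 v ++ x ++ [:: v]) + t.
  by rewrite !size_cat size_nseq /=; lia.
rewrite !cut_ok_cat !allrel_catr allrel1r.
have Hdrop : atmost v (drop t y) by apply/allP => a /mem_drop /(allP Hy).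
have -> : allrel (fun b a => b <= a) (drop t y) (nseq m.-1 v).
  by apply/allrelP => b a /(allP Hdrop) ? /nseqP[-> _].
by rewrite Hdrop andbT.
Qed.

Lemma count_iota_shift (P : pred nat) a n :
  count P (iota a n) = count (fun t => P (a + t)) (iota 0 n).
Proof. by rewrite -{1}(addn0 a) iotaDl count_map. Qed.

Lemma size_cuts_insert m v w c : 0 < m -> below v w -> c <= size w ->
  size (cuts (insert_top m v w c)) = m + count (fun i => c <= i) (cuts w).
Proof.
move=> Hm Hlt Hcw; rewrite /insert_top.
set x := take c w; set y := drop c w; set s := nseq m.-1 v ++ x ++ v :: y.
have Hx : size x = c by rewrite size_takel.
have below_x : below v x by apply/allP => a /mem_take /(allP Hlt).
have atmost_y : atmost v y by apply/allP => a /mem_drop /(allP Hlt) /ltnW.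
have Hsw : size w = c + (size y) by rewrite size_drop; lia.
rewrite /cuts size_filter count_filter Hsw -addnS.
have -> : (size s).+1 = m + (c + (size y).+1).
  by rewrite !size_cat size_nseq /= Hx; lia.
rewrite !iotaD !count_cat !add0n; congr (_ + _).
  rewrite -[RHS](size_iota 0 m) -count_predT; apply: eq_in_count => i.
  rewrite mem_iota add0n => Hi; apply: cut_ok_top_prefix => //.
  by apply/allP => a; rewrite /x /y cat_take_drop => /(allP Hlt) /ltnW.
have no_cut (P : pred nat) a : {in iota a c, P =1 pred0} -> count P (iota a c) = 0.
  by move=> HP; rewrite (eq_in_count HP) count_pred0.
rewrite !no_cut ?add0n => [|i|i].
- rewrite (count_iota_shift _ (m + c)) (count_iota_shift _ c).
  apply: eq_count => t /=; rewrite leq_addr -Hx cut_ok_top_suffix //.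
  by rewrite /x /y cat_take_drop.
- by rewrite mem_iota add0n /= => Hi; rewrite leqNgt Hi.
rewrite mem_iota => /andP[Hmi Hi]; rewrite -(subnKC Hmi) /=.
by apply/negbTE; apply: cut_ok_top_middle => //; rewrite Hx; lia.
Qed.

Fixpoint tree (m t v : nat) (w : seq nat) : seq (seq nat) :=
  if t is t'.+1 then
    flatten [seq tree m t' v.+1 (insert_top m v w c) | c <- cuts w]
  else [:: w].

Definition completion (m t v : nat) (w s : seq nat) : bool :=
  [&& avoider s, [seq x <- s | x < v] == w, below (v + t) s &
      all (fun u => count_mem u s == m) (iota v t)].

Lemma count_filter_lt u v s : u < v ->
  count_mem u [seq x <- s | x < v] = count_mem u s.
Proof.
by move=> H; rewrite count_filter; apply: eq_count => x /=; case: eqP => // ->.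
Qed.

Lemma filter_lt_succ v s :
  [seq x <- [seq x <- s | x < v.+1] | x < v] = [seq x <- s | x < v].
Proof.
rewrite -filter_predI; apply: eq_filter => x /=.
by rewrite andb_idr // => H; rewrite ltnS ltnW.
Qed.

(* The tree lists exactly the completions: going down the tree, the new
   value is inserted at a cut; going up, [insert_top_surj] finds the cut. *)
Lemma mem_tree m t v w s : 0 < m -> avoider w -> below v w ->
  (s \in tree m t v w) = completion m t v w s.
Proof.
move=> Hm; elim: t v w s => [|t IH] v w s Hw Hvw.
  rewrite /completion /= inE addn0 andbT.
  apply/eqP/idP => [->|/and3P[_ /eqP <- Hs]]; last exact/esym/all_filterP.
  by rewrite Hw Hvw /=; apply/andP; split=> //; apply/eqP/all_filterP.
apply/flattenP/idP => [[ds /mapP[c Hc ->]]|].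
  move: Hc; rewrite mem_cuts => /andP[Hc _].
  rewrite IH ?insert_top_below ?avoider_insert_top // /completion.
  case/and4P=> [Hs /eqP Hsw Hlt Hcount]; rewrite Hs /= -addSnnS Hlt Hcount andbT.
  rewrite -filter_lt_succ Hsw insert_top_filter // eqxx /=.
  by rewrite -(count_filter_lt _ (ltnSn v)) Hsw insert_top_count.
case/and4P=> [Hs /eqP Hsw Hlt /= /andP[/eqP Hv Hcount]].
set u := [seq x <- s | x < v.+1].
have Hu : avoider u by apply/(avoider_subseq _ Hs)/filter_subseq.
have Hlu : atmost v u by apply/allP => z; rewrite mem_filter => /andP[].
have Hvu : count_mem v u = m by rewrite count_filter_lt.
have [c Hc Eu] := insert_top_surj Hm Hu Hlu Hvu.
rewrite /= filter_lt_succ Hsw in Hc Eu.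
exists (tree m t v.+1 (insert_top m v w c)); first by apply/mapP; exists c.
move: Hc; rewrite mem_cuts => /andP[Hc _].
by rewrite IH ?insert_top_below ?avoider_insert_top // /completion Hs -Eu eqxx
  addSnnS Hlt Hcount.
Qed.

Lemma uniq_flatten_map (T : eqType) (F : nat -> seq T) (l : seq nat) :
  uniq l -> (forall c, c \in l -> uniq (F c)) ->
  (forall c c' s, c \in l -> c' \in l -> s \in F c -> s \in F c' -> c = c') ->
  uniq (flatten (map F l)).
Proof.
elim: l => //= c l IH /andP[Hcl Hu] HF Hd.
rewrite cat_uniq HF ?inE ?eqxx //= IH ?andbT //; first last.
- by move=> a b s Ha Hb; apply: Hd; rewrite inE ?Ha ?Hb orbT.
- by move=> a Ha; apply: HF; rewrite inE Ha orbT.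
apply/hasPn => s /flattenP[ds /mapP[c' Hc' ->] Hs]; apply/negP => Hs'.
have E : c = c' by apply: (Hd c c' s); rewrite ?inE ?eqxx ?Hc' ?orbT.
by subst c'; rewrite Hc' in Hcl.
Qed.

(* The tree has no repetitions: distinct cuts give distinct subtrees. *)
Lemma uniq_tree m t v w : 0 < m -> avoider w -> below v w -> uniq (tree m t v w).
Proof.
move=> Hm; elim: t v w => [//|t IH] v w Hw Hvw /=.
apply: uniq_flatten_map.
- exact/filter_uniq/iota_uniq.
- move=> c; rewrite mem_cuts => /andP[Hc _].
  by apply: IH; [apply: avoider_insert_top | apply: insert_top_below].
move=> c c' s; rewrite !mem_cuts => /andP[Hc Hcw] /andP[Hc' Hcw'].
rewrite !mem_tree ?insert_top_below ?avoider_insert_top // /completion.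
move=> /and4P[_ /eqP E1 _ _] /and4P[_ /eqP E2 _ _].
by apply: (insert_top_inj (m:=m) Hvw) => //; rewrite -E1 -E2.
Qed.

(* The size of the tree only depends on the number k of cuts of its root. *)
Fixpoint tree_count (m t k : nat) : nat :=
  if t is t'.+1 then sumn [seq tree_count m t' (m + i) | i <- iota 1 k] else 1.

Lemma sum_rank (f : nat -> nat) (l : seq nat) : sorted ltn l ->
  sumn [seq f (count (fun i => c <= i) l) | c <- l] =
  sumn [seq f i | i <- iota 1 (size l)].
Proof.
elim: l => //= c0 l IH Hs.
move: Hs; rewrite (path_sortedE ltn_trans) => /andP[Hall Hsl].
have -> : count (fun i => c0 <= i) l = size l.
  by apply/eqP; rewrite -all_count; apply/allP => z /(allP Hall) /ltnW.
have -> : [seq f ((c <= c0) + count (fun i => c <= i) l) | c <- l] =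
          [seq f (count (fun i => c <= i) l) | c <- l].
  by apply/eq_in_map => c /(allP Hall) Hc /=; rewrite leqNgt Hc.
rewrite IH // leqnn add1n.
transitivity (sumn [seq f i | i <- iota 1 (size l).+1]); last by [].
by rewrite -addn1 iotaD map_cat sumn_cat /= addn0 addnC (addnC 1).
Qed.

Lemma size_tree m t v w : 0 < m -> below v w ->
  size (tree m t v w) = tree_count m t (size (cuts w)).
Proof.
move=> Hm; elim: t v w => [//|t IH] v w Hw /=.
rewrite size_flatten /shape -map_comp.
rewrite (_ : map _ _ =
  [seq tree_count m t (m + count (fun i => c <= i) (cuts w)) | c <- cuts w]).
  by rewrite (sum_rank (fun i => tree_count m t (m + i))) // cuts_sorted.
apply/eq_in_map => c; rewrite mem_cuts => /andP[_ Hcw] /=.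
by rewrite IH ?insert_top_below // size_cuts_insert.
Qed.

Lemma tree_count_rec m t k :
  tree_count m t.+1 k.+1 = tree_count m t.+1 k + tree_count m t (m + k.+1).
Proof.
transitivity (sumn [seq tree_count m t (m + i) | i <- iota 1 k.+1]); first by [].
by rewrite -(addn1 k) iotaD map_cat sumn_cat /= addn0 (addnC 1).
Qed.

Lemma tree_count1 m k : tree_count m 1 k = k.
Proof. by elim: k => // k IH; rewrite tree_count_rec IH addn1. Qed.

Lemma tree_count_closed m t k :
  tree_count m t.+1 k + m.+1 * 'C(m * t.+1 + t + k, t) =
  'C((m * t.+1 + t + k).+1, t.+1).
Proof.
elim: t k => [|t IH] k; first by rewrite tree_count1 !bin0 bin1 muln1; lia.
elim: k => [|k IHk].
  have H := mul_bin_diag (t.+2 * m.+1) t.+1.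
  have E : (t.+2 * m.+1).-1 = m * t.+2 + t.+1 by lia.
  rewrite add0n addn0 -E prednK ?muln_gt0 //.
  by apply/eqP; rewrite -(eqn_pmul2l (ltn0Sn t.+1)) mulnA H.
rewrite tree_count_rec.
have := IH (m + k.+1).
have -> : m * t.+1 + t + (m + k.+1) = m * t.+2 + t.+1 + k by lia.
have -> : m * t.+2 + t.+1 + k.+1 = (m * t.+2 + t.+1 + k).+1 by lia.
move: IHk; set P := m * t.+2 + t.+1 + k.
rewrite (binS P.+1 t.+1) (binS P t) (binS P t.+1).
nia.
Qed.

(* For the empty word (k = 1) the closed form collapses, since
   (t+1) C(N, t+1) = (N - t) C(N, t), to C((m+1)n, n) / (mn + 1). *)
Lemma tree_count_empty m n :
  (m * n + 1) * tree_count m n 1 = 'C((m + 1) * n, n).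
Proof.
case: n => [|t]; first by rewrite muln0 bin0.
have := tree_count_closed m t 1.
have -> : m * t.+1 + t + 1 = (m + 1) * t.+1 by lia.
have := mul_bin_left ((m + 1) * t.+1) t.
have -> : (m + 1) * t.+1 - t = m * t.+1 + 1 by lia.
rewrite binS.
nia.
Qed.

Lemma count_multiset n m x :
  count_mem x (multiset_nm n m) = m * (x \in iota 1 n).
Proof.
rewrite /multiset_nm count_flatten -map_comp -(count_uniq_mem x (iota_uniq 1 n)).
elim: (iota 1 n) => [|i l IH] /=; first by rewrite muln0.
by rewrite IH count_nseq mulnDr /= mulnC.
Qed.

Lemma size_multiset n m : size (multiset_nm n m) = n * m.
Proof.
rewrite /multiset_nm size_flatten /shape -map_comp -{2}(size_iota 1 n).
by elim: (iota 1 n) => //= i l ->; rewrite size_nseq mulSn.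
Qed.

Lemma perm_multisetE n m s : 0 < m ->
  perm_eq s (multiset_nm n m) =
  [&& [seq x <- s | x < 1] == [::], below (1 + n) s &
      all (fun u => count_mem u s == m) (iota 1 n)].
Proof.
move=> Hm; apply/idP/idP.
  move/permP => H.
  have C x : count_mem x s = m * (x \in iota 1 n).
    by rewrite (H (pred1 x)) count_multiset.
  have Hin x : x \in s -> x \in iota 1 n.
    move=> Hx; apply/negPn/negP => Hn.
    have : 0 < count_mem x s by rewrite -has_count has_pred1.
    by rewrite C (negbTE Hn) muln0.
  apply/and3P; split.
  - rewrite -[_ == _]negbK -has_filter; apply/hasPn => x /Hin.
    by rewrite mem_iota => /andP[H1 _]; rewrite -leqNgt.
  - by apply/allP => x /Hin; rewrite mem_iota => /andP[].
  - by apply/allP => u Hu; rewrite C Hu muln1.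
move=> /and3P[Hpos Hlt Hcount].
rewrite /perm_eq; apply/allP => x _ /=; apply/eqP; rewrite count_multiset.
case: (boolP (x \in iota 1 n)) => Hx.
  by rewrite muln1; apply/eqP; apply: (allP Hcount).
rewrite muln0; apply/count_memPn; apply/negP => Hxs.
move: Hx; rewrite mem_iota (allP Hlt x Hxs) andbT -leqNgt.
have : x \notin [seq x <- s | x < 1] by rewrite (eqP Hpos).
by rewrite mem_filter Hxs andbT; case: x {Hxs}.
Qed.

Lemma val_pmap_insub n (s : seq nat) : below n s ->
  map val (pmap (insub : nat -> option 'I_n) s) = s.
Proof.
elim: s => //= y s IH /andP[Hy Hs].
by case: insubP => [u _ Eu|]; [rewrite /= -Eu IH | rewrite Hy].
Qed.

Lemma card_tuple_code n k (P : pred (seq nat)) (L : seq (seq nat)) :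
  uniq L -> (forall s, (s \in L) = P s) ->
  (forall s, P s -> (size s = k) /\ all (fun x => 0 < x <= n) s) ->
  #|[set t : k.-tuple 'I_n | P [seq (val i).+1 | i <- t]]| = size L.
Proof.
move=> HL memL HP; rewrite cardE.
set f := fun t : k.-tuple 'I_n => [seq (val i).+1 | i <- t].
have f_inj : injective f.
  move=> t1 t2 /(inj_map (fun a b (H : (val a).+1 = (val b).+1) =>
    val_inj (succn_inj H))).
  by move/val_inj.
rewrite -(size_map f); apply/perm_size/uniq_perm => //.
  by rewrite map_inj_uniq // enum_uniq.
move=> s; rewrite memL; apply/mapP/idP => [[t Ht ->]|Ps].
  by move: Ht; rewrite mem_enum inE.
have [Hsize Hrange] := HP s Ps.
set u := pmap (insub : nat -> option 'I_n) (map predn s).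
have Hu : map val u = map predn s.
  apply: val_pmap_insub; apply/allP => y /mapP[x Hx ->].
  by case/andP: (allP Hrange x Hx); case: x {Hx}.
have Hsz : size u == k by rewrite -(size_map val) Hu size_map Hsize.
have Es : f (Tuple Hsz) = s.
  rewrite /f /= (map_comp succn val) Hu -map_comp; apply: map_id_in => x Hx /=.
  by rewrite prednK //; case/andP: (allP Hrange x Hx).
by exists (Tuple Hsz); rewrite ?mem_enum ?inE -/(f _) Es.
Qed.

Lemma snm_tree n m : 0 < m ->
  snm n m [:: [:: 1; 2; 2]; [:: 1; 3; 2]] = size (tree m n 1 [::]).
Proof.
move=> Hm; apply: (@card_tuple_code n (n * m)
  (fun s => is_perm_nm n m s && all (avoids s) [:: [:: 1; 2; 2]; [:: 1; 3; 2]])).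
- exact: uniq_tree.
- move=> s; rewrite mem_tree // /completion /is_perm_nm avoids_122_132.
  by rewrite perm_multisetE // andbC -!andbA.
move=> s /andP[Hperm _]; split.
  by rewrite (perm_size Hperm) size_multiset.
move: Hperm; rewrite /is_perm_nm perm_multisetE // => /and3P[/eqP Hpos Hlt _].
apply/allP => x Hx; have := allP Hlt x Hx; rewrite add1n ltnS => ->.
rewrite andbT lt0n.
apply: contraTneq Hx => ->.
apply/negP => H0; have : 0 \in [seq x <- s | x < 1] by rewrite mem_filter H0.
by rewrite Hpos.
Qed.

Theorem mainTheorem8 (m n : nat) (hm : (1 <= m)%N) :
  ((snm n m [:: [:: 1; 2; 2]; [:: 1; 3; 2]])%:R : rat)
  = (('C((m + 1) * n, n))%:R / (m * n + 1)%:R)%R.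
Proof.
rewrite snm_tree // size_tree // -tree_count_empty natrM.
by rewrite mulrC mulKf // pnatr_eq0 addn1.
Qed.
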